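(* Every bi-nested sequent that is provable in the calculus $\mathbf{C}_{\mathbf{IK}}$ is valid, i.e. if $S$ is provable in $\mathbf{C}_{\mathbf{IK}}$ then for every bi-relational model $\mathcal{M}=(W,\le,R,V)$ and every $w\in W$ we have $\mathcal{M},w\Vdash S$.
   Context: Formulas are generated by $A::=p\mid\bot\mid\top\mid A\wedge A\mid A\vee A\mid A\supset A\mid\Box A\mid\Diamond A$, with $p$ ranging over a countable set $\mathsf{At}$ of atoms. A bi-relational model is $\mathcal{M}=(W,\le,R,V)$ with $W\neq\emptyset$, $\le$ a reflexive transitive relation on $W$, $R$ a binary relation on $W$, and $V:W\to\wp(\mathsf{At})$ such that $x\le y$ implies $V(x)\subseteq V(y)$; moreover (FC) if $x\le x'$ and $xRz$ then there is $z'$ with $x'Rz'$ and $z\le z'$; (BC) if $xRz$ and $z\le z'$ then there is $x'$ with $x\le x'$ and $x'Rz'$. Forcing: $w\not\Vdash\bot$, $w\Vdash\top$, $w\Vdash p$ iff $p\in V(w)$; $\wedge,\vee$ pointwise; $w\Vdash B\supset C$ iff for all $w'\ge w$, $w'\Vdash B$ implies $w'\Vdash C$; $w\Vdash\Box B$ iff for all $w',v'$ with $w\le w'$ and $w'Rv'$, $v'\Vdash B$; $w\Vdash\Diamond B$ iff there is $v$ with $wRv$ and $v\Vdash B$. Bi-nested sequents: the empty sequent $\Rightarrow$ is one; if $\Gamma,\Delta'$ are finite multisets of formulas and $S_1,\dots,S_m,T_1,\dots,T_n$ ($m,n\ge0$) are bi-nested sequents then $\Gamma\Rightarrow\Delta',\langle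 S_1\rangle,\dots,\langle S_m\rangle,[T_1],\dots,[T_n]$ is one. $\langle S\rangle$ is an implication block, $[T]$ a modal block; $\Gamma$ is the antecedent, the rest the consequent. Forcing is extended: $x\not\Vdash(\Rightarrow)$; $x\Vdash[T]$ iff $y\Vdash T$ for all $y$ with $xRy$; $x\Vdash\langle T\rangle$ iff $x'\Vdash T$ for all $x'\ge x$; $x\Vdash\Gamma\Rightarrow\Delta$ iff $x\not\Vdash A$ for some $A\in\Gamma$ or $x\Vdash\mathcal{O}$ for some formula or block $\mathcal{O}\in\Delta$. A sequent is valid if it is forced at every world of every bi-relational model. A context $G\{\ \}$ is either the hole $\{\ \}$, or $\Gamma\Rightarrow\Delta,\langle G'\{\ \}\rangle$, or $\Gamma\Rightarrow\Delta,[G'\{\ \}]$ for a sequent $\Gamma\Rightarrow\Delta$ and context $G'\{\ \}$; $G\{S\}$ is the result of filling the hole with $S$. For the consequent $\Delta$ of a sequent, its local positive part $\Delta^*$ is: $\emptyset$ if $\Delta$ contains no modal block; and if $\Delta=\Delta_0,[\Lambda_1\Rightarrow\Theta_1],\dots,[\Lambda_k\Rightarrow\Theta_k]$ with $\Delta_0$ free of modal blocks, then $\Delta^*=[\Lambda_1\Rightarrow\Theta_1^*],\dots,[\Lambda_k\Rightarrow\Theta_k^*]$. The calculus $\mathbf{C}_{\mathbf{IK}}$ (premisses / conclusion; $\Gamma,\Gamma',\Delta,\Sigma,\Pi,\Lambda,\Theta$ multisets): axioms $G\{\Gamma,\bot\Rightarrow\Delta\}$, $G\{\Gamma\Rightarrow\top,\Delta\}$,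 $G\{\Gamma,p\Rightarrow\Delta,p\}$ ($p$ atomic); $(\wedge_L)$ $G\{A,B,\Gamma\Rightarrow\Delta\}$ / $G\{A\wedge B,\Gamma\Rightarrow\Delta\}$; $(\wedge_R)$ $G\{\Gamma\Rightarrow\Delta,A\}$, $G\{\Gamma\Rightarrow\Delta,B\}$ / $G\{\Gamma\Rightarrow\Delta,A\wedge B\}$; $(\vee_L)$ $G\{\Gamma,A\Rightarrow\Delta\}$, $G\{\Gamma,B\Rightarrow\Delta\}$ / $G\{\Gamma,A\vee B\Rightarrow\Delta\}$; $(\vee_R)$ $G\{\Gamma\Rightarrow\Delta,A,B\}$ / $G\{\Gamma\Rightarrow\Delta,A\vee B\}$; $(\supset_L)$ $G\{\Gamma,A\supset B\Rightarrow A,\Delta\}$, $G\{\Gamma,B\Rightarrow\Delta\}$ / $G\{\Gamma,A\supset B\Rightarrow\Delta\}$; $(\supset_R)$ $G\{\Gamma\Rightarrow\Delta,\langle A\Rightarrow B\rangle\}$ / $G\{\Gamma\Rightarrow\Delta,A\supset B\}$; $(\Box_L)$ $G\{\Gamma,\Box A\Rightarrow\Delta,[\Sigma,A\Rightarrow\Pi]\}$ / $G\{\Gamma,\Box A\Rightarrow\Delta,[\Sigma\Rightarrow\Pi]\}$; $(\Box_R)$ $G\{\Gamma\Rightarrow\Delta,\langle\,\Rightarrow[\,\Rightarrow A]\rangle\}$ / $G\{\Gamma\Rightarrow\Delta,\Box A\}$; $(\Diamond_L)$ $G\{\Gamma\Rightarrow\Delta,[A\Rightarrow\,]\}$ / $G\{\Gamma,\Diamond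 A\Rightarrow\Delta\}$; $(\Diamond_R)$ $G\{\Gamma\Rightarrow\Delta,\Diamond A,[\Sigma\Rightarrow\Pi,A]\}$ / $G\{\Gamma\Rightarrow\Delta,\Diamond A,[\Sigma\Rightarrow\Pi]\}$; (trans) $G\{\Gamma,\Gamma'\Rightarrow\Delta,\langle\Gamma',\Sigma\Rightarrow\Pi\rangle\}$ / $G\{\Gamma,\Gamma'\Rightarrow\Delta,\langle\Sigma\Rightarrow\Pi\rangle\}$; $(\mathrm{inter}_{fc})$ $G\{\Gamma\Rightarrow\Delta,\langle\Sigma\Rightarrow\Pi,[\Lambda\Rightarrow\Theta^*]\rangle,[\Lambda\Rightarrow\Theta]\}$ / $G\{\Gamma\Rightarrow\Delta,\langle\Sigma\Rightarrow\Pi\rangle,[\Lambda\Rightarrow\Theta]\}$; $(\mathrm{inter}_{bc})$ $G\{\Gamma\Rightarrow\Delta,[\Lambda\Rightarrow\Theta,\langle\Sigma\Rightarrow\Pi\rangle],\langle\,\Rightarrow[\Sigma\Rightarrow\Pi]\rangle\}$ / $G\{\Gamma\Rightarrow\Delta,[\Lambda\Rightarrow\Theta,\langle\Sigma\Rightarrow\Pi\rangle]\}$. A proof of $S$ is a finite tree of sequents built with these rules, with root $S$ and all leaves axioms; a formula $A$ is provable if $\Rightarrow A$ is. *)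

From Stdlib Require Import List Permutation.
Import ListNotations.

Definition atom := nat.

Inductive form : Type :=
| Var : atom -> form
| Bot : form
| Top : form
| And : form -> form -> form
| Or  : form -> form -> form
| Imp : form -> form -> form
| Box : form -> form
| Dia : form -> form.

(* The consequent Delta, a multiset of
   formulas, implication blocks <S> and modal blocks [T], is represented by
   three lists: its formulas, the sequents inside its implication blocks and
   the sequents inside its modal blocks.  Multisets are represented by lists;
   the calculus below is closed under permutation (rule [prov_perm]), so list
   order is irrelevant. *)
Inductive bseq : Type :=
| Sq : list form -> list form -> list bseq -> list bseq -> bseq.

Definition empty_seq : bseq := Sq [] [] [] [].

Fixpoint star (s : bseq) : bseq :=
  match s with
  | Sq G _ _ ms => Sq G [] [] (map star ms)
  end.

Inductive ctx : Type :=
| Hole : ctx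
| CImp : list form -> list form -> list bseq -> list bseq -> ctx -> ctx
| CBox : list form -> list form -> list bseq -> list bseq -> ctx -> ctx.

Fixpoint fill (C : ctx) (s : bseq) : bseq :=
  match C with
  | Hole => s
  | CImp G fs is ms C' => Sq G fs (fill C' s :: is) ms
  | CBox G fs is ms C' => Sq G fs is (fill C' s :: ms)
  end.

Inductive provable : bseq -> Prop :=
| prov_perm : forall C G1 f1 i1 m1 G2 f2 i2 m2,
    Permutation G1 G2 -> Permutation f1 f2 ->
    Permutation i1 i2 -> Permutation m1 m2 ->
    provable (fill C (Sq G1 f1 i1 m1)) -> provable (fill C (Sq G2 f2 i2 m2))
| ax_bot : forall C G fs is ms, provable (fill C (Sq (Bot :: G) fs is ms))
| ax_top : forall C G fs is ms, provable (fill C (Sq G (Top :: fs) is ms))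
| ax_id : forall C p G fs is ms,
    provable (fill C (Sq (Var p :: G) (Var p :: fs) is ms))
| andL : forall C A B G fs is ms,
    provable (fill C (Sq (A :: B :: G) fs is ms)) ->
    provable (fill C (Sq (And A B :: G) fs is ms))
| andR : forall C A B G fs is ms,
    provable (fill C (Sq G (A :: fs) is ms)) ->
    provable (fill C (Sq G (B :: fs) is ms)) ->
    provable (fill C (Sq G (And A B :: fs) is ms))
| orL : forall C A B G fs is ms,
    provable (fill C (Sq (A :: G) fs is ms)) ->
    provable (fill C (Sq (B :: G) fs is ms)) ->
    provable (fill C (Sq (Or A B :: G) fs is ms))
| orR : forall C A B G fs is ms,
    provable (fill C (Sq G (A :: B :: fs) is ms)) ->
    provable (fill C (Sq G (Or A B :: fs) is ms))
| impL : forall C A B G fs is ms,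
    provable (fill C (Sq (Imp A B :: G) (A :: fs) is ms)) ->
    provable (fill C (Sq (B :: G) fs is ms)) ->
    provable (fill C (Sq (Imp A B :: G) fs is ms))
| impR : forall C A B G fs is ms,
    provable (fill C (Sq G fs (Sq [A] [B] [] [] :: is) ms)) ->
    provable (fill C (Sq G (Imp A B :: fs) is ms))
| boxL : forall C A G fs is ms S P Pi Pm,
    provable (fill C (Sq (Box A :: G) fs is (Sq (A :: S) P Pi Pm :: ms))) ->
    provable (fill C (Sq (Box A :: G) fs is (Sq S P Pi Pm :: ms)))
| boxR : forall C A G fs is ms,
    provable (fill C (Sq G fs (Sq [] [] [] [Sq [] [A] [] []] :: is) ms)) ->
    provable (fill C (Sq G (Box A :: fs) is ms))
| diaL : forall C A G fs is ms,
    provable (fill C (Sq G fs is (Sq [A] [] [] [] :: ms))) ->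
    provable (fill C (Sq (Dia A :: G) fs is ms))
| diaR : forall C A G fs is ms S P Pi Pm,
    provable (fill C (Sq G (Dia A :: fs) is (Sq S (A :: P) Pi Pm :: ms))) ->
    provable (fill C (Sq G (Dia A :: fs) is (Sq S P Pi Pm :: ms)))
| trans : forall C G G' fs is ms S P Pi Pm,
    provable (fill C (Sq (G ++ G') fs (Sq (G' ++ S) P Pi Pm :: is) ms)) ->
    provable (fill C (Sq (G ++ G') fs (Sq S P Pi Pm :: is) ms))
| inter_fc : forall C G fs is ms S P Pi Pm T,
    provable (fill C (Sq G fs (Sq S P Pi (star T :: Pm) :: is) (T :: ms))) ->
    provable (fill C (Sq G fs (Sq S P Pi Pm :: is) (T :: ms)))
| inter_bc : forall C G fs is ms L Tf Ti Tm U,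
    provable (fill C (Sq G fs (Sq [] [] [] [U] :: is) (Sq L Tf (U :: Ti) Tm :: ms))) ->
    provable (fill C (Sq G fs is (Sq L Tf (U :: Ti) Tm :: ms))).

Record model : Type := {
  W : Type;
  W_inh : inhabited W;
  le : W -> W -> Prop;
  R : W -> W -> Prop;
  V : W -> atom -> Prop;
  le_refl : forall x, le x x;
  le_trans : forall x y z, le x y -> le y z -> le x z;
  V_mono : forall x y p, le x y -> V x p -> V y p;
  FC : forall x x' z, le x x' -> R x z -> exists z', R x' z' /\ le z z';
  BC : forall x z z', R x z -> le z z' -> exists x', le x x' /\ R x' z'
}.

Fixpoint fforces (M : model) (w : W M) (A : form) : Prop :=
  match A with
  | Var p => V M w p
  | Bot => False
  | Top => True
  | And B C => fforces M w B /\ fforces M w C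
  | Or B C => fforces M w B \/ fforces M w C
  | Imp B C => forall w', le M w w' -> fforces M w' B -> fforces M w' C
  | Box B => forall w' v', le M w w' -> R M w' v' -> fforces M v' B
  | Dia B => exists v, R M w v /\ fforces M v B
  end.

Fixpoint forces (M : model) (s : bseq) (x : W M) {struct s} : Prop :=
  match s with
  | Sq G fs is ms =>
      (exists A, In A G /\ ~ fforces M x A)
      \/ (exists A, In A fs /\ fforces M x A)
      \/ (let fix anyI (l : list bseq) : Prop :=
            match l with
            | [] => False
            | T :: l' => (forall x', le M x x' -> forces M T x') \/ anyI l'
            end in anyI is)
      \/ (let fix anyM (l : list bseq) : Prop :=
            match l with
            | [] => False
            | T :: l' => (forall y, R M x y -> forces M T y) \/ anyM l'
            end in anyM ms)
  end.

Definition valid (s : bseq) : Prop := forall (M : model) (w : W M), forces M s w.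

(* Each rule is sound
   pointwise: at every world of every model, forcing of the premisses implies
   forcing of the conclusion; since a context only places its hole inside
   blocks, this pointwise implication lifts through any context.  Persistence
   of formulas along [le] justifies (trans); (inter_bc) is the backward
   confluence condition read off directly; (inter_fc) uses forward confluence
   together with the fact that forcing of the local positive part [T^*] at a
   world above [y] already yields [T] at [y]. *)
From Stdlib Require Import List Permutation Classical.
Import ListNotations.

Fixpoint bseq_nested_ind (P : bseq -> Prop)
  (H : forall G fs is ms, Forall P is -> Forall P ms -> P (Sq G fs is ms))
  (s : bseq) : P s :=
  match s with
  | Sq G fs is ms =>
      let fix all_P l : Forall P l :=
        match l with
        | [] => Forall_nil _
        | t :: l' => Forall_cons _ (bseq_nested_ind P H t) (all_P l')
        end in
      H G fs is ms (all_P is) (all_P ms)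
  end.

Section Forcing.
Variable M : model.

Lemma fforces_mono A x y : le M x y -> fforces M x A -> fforces M y A.
Proof.
  revert x y; induction A; simpl; intros x y Hxy HA; try tauto.
  - eapply V_mono; eauto.
  - destruct HA; split; eauto.
  - destruct HA; [left | right]; eauto.
  - intros z Hyz; apply HA; eapply le_trans; eauto.
  - intros z v Hyz; apply HA; eapply le_trans; eauto.
  - destruct HA as [v [Hxv Hv]].
    destruct (FC M x y v Hxy Hxv) as [v' [Hyv' Hvv']].
    exists v'; eauto.
Qed.

Lemma forces_SqE G fs is ms x :
  forces M (Sq G fs is ms) x <->
  (exists A, In A G /\ ~ fforces M x A) \/ (exists A, In A fs /\ fforces M x A) \/
  (exists T, In T is /\ forall x', le M x x' -> forces M T x') \/
  (exists T, In T ms /\ forall y, R M x y -> forces M T y).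
Proof.
  assert (any_In : forall (P : bseq -> Prop) l,
            (fix any l := match l with [] => False | T :: l' => P T \/ any l' end) l <->
            exists T, In T l /\ P T).
  { intros P l; induction l as [|T l IHl]; [firstorder |].
    rewrite IHl; simpl; firstorder congruence. }
  simpl; rewrite (any_In (fun T => forall x', le M x x' -> forces M T x')),
    (any_In (fun T => forall y, R M x y -> forces M T y)).
  reflexivity.
Qed.

Lemma forces_ant_cons A G fs is ms x :
  forces M (Sq (A :: G) fs is ms) x <-> ~ fforces M x A \/ forces M (Sq G fs is ms) x.
Proof. simpl; firstorder congruence. Qed.

Lemma forces_suc_cons A G fs is ms x :
  forces M (Sq G (A :: fs) is ms) x <-> fforces M x A \/ forces M (Sq G fs is ms) x.
Proof. simpl; firstorder congruence. Qed.

Lemma forces_imp_cons T G fs is ms x :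
  forces M (Sq G fs (T :: is) ms) x <->
  (forall x', le M x x' -> forces M T x') \/ forces M (Sq G fs is ms) x.
Proof. simpl; tauto. Qed.

Lemma forces_box_cons T G fs is ms x :
  forces M (Sq G fs is (T :: ms)) x <->
  (forall y, R M x y -> forces M T y) \/ forces M (Sq G fs is ms) x.
Proof. simpl; tauto. Qed.

Lemma forces_ant_app G G' fs is ms x :
  forces M (Sq (G ++ G') fs is ms) x <->
  (exists A, In A G /\ ~ fforces M x A) \/ forces M (Sq G' fs is ms) x.
Proof. simpl; setoid_rewrite in_app_iff; firstorder. Qed.

Lemma not_forces_empty x : ~ forces M empty_seq x.
Proof. simpl; firstorder. Qed.

Lemma forces_Sq_ant A G fs is ms x :
  In A G -> ~ fforces M x A -> forces M (Sq G fs is ms) x.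
Proof. intros; left; eauto. Qed.

Lemma forces_perm G1 f1 i1 m1 G2 f2 i2 m2 x :
  Permutation G1 G2 -> Permutation f1 f2 -> Permutation i1 i2 -> Permutation m1 m2 ->
  forces M (Sq G1 f1 i1 m1) x -> forces M (Sq G2 f2 i2 m2) x.
Proof.
  intros HG Hf Hi Hm; rewrite !forces_SqE.
  intros [[A [HA H]] | [[A [HA H]] | [[T [HT H]] | [T [HT H]]]]];
    [left | right; left | right; right; left | right; right; right];
    eauto using Permutation_in.
Qed.

Lemma forces_star_le T y z : le M y z -> forces M (star T) z -> forces M T y.
Proof.
  revert y z; induction T as [G fs is ms _ IHms] using bseq_nested_ind.
  intros y z Hyz; simpl star; rewrite !forces_SqE.
  intros [[A [HA HnA]] | [[A [[] _]] | [[T [[] _]] | [T' [HT' HzT']]]]].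
  - left; exists A; split; [exact HA |].
    intros HyA; apply HnA; eapply fforces_mono; eauto.
  - apply in_map_iff in HT' as [T [<- HT]].
    right; right; right; exists T; split; [exact HT |].
    intros u Hyu; destruct (FC M y z u Hyz Hyu) as [u' [Hzu' Huu']].
    rewrite Forall_forall in IHms; eapply IHms; eauto.
Qed.

Lemma forces_fill C s x : (forall y, forces M s y) -> forces M (fill C s) x.
Proof.
  revert x; induction C; simpl fill; intros x Hs; auto.
  - apply forces_imp_cons; auto.
  - apply forces_box_cons; auto.
Qed.

Lemma forces_fill_mono C s1 s2 :
  (forall y, forces M s1 y -> forces M s2 y) ->
  forall x, forces M (fill C s1) x -> forces M (fill C s2) x.
Proof.
  intros Hs; induction C; simpl fill; intros x; auto.
  - rewrite !forces_imp_cons; firstorder.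
  - rewrite !forces_box_cons; firstorder.
Qed.

Lemma forces_fill_mono2 C s1 s2 s3 :
  (forall y, forces M s1 y -> forces M s2 y -> forces M s3 y) ->
  forall x, forces M (fill C s1) x -> forces M (fill C s2) x -> forces M (fill C s3) x.
Proof.
  intros Hs; induction C; simpl fill; intros x; auto.
  - rewrite !forces_imp_cons; firstorder.
  - rewrite !forces_box_cons; firstorder.
Qed.

Section Rules.
Variables (G fs : list form) (is ms : list bseq) (x : W M).

Lemma forces_ax_bot : forces M (Sq (Bot :: G) fs is ms) x.
Proof. apply forces_ant_cons; simpl; tauto. Qed.

Lemma forces_ax_top : forces M (Sq G (Top :: fs) is ms) x.
Proof. apply forces_suc_cons; simpl; tauto. Qed.

Lemma forces_ax_id p : forces M (Sq (Var p :: G) (Var p :: fs) is ms) x.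
Proof.
  rewrite forces_ant_cons, forces_suc_cons; simpl.
  destruct (classic (V M x p)); tauto.
Qed.

Lemma forces_andL A B :
  forces M (Sq (A :: B :: G) fs is ms) x -> forces M (Sq (And A B :: G) fs is ms) x.
Proof. rewrite !forces_ant_cons; simpl; tauto. Qed.

Lemma forces_andR A B :
  forces M (Sq G (A :: fs) is ms) x -> forces M (Sq G (B :: fs) is ms) x ->
  forces M (Sq G (And A B :: fs) is ms) x.
Proof. rewrite !forces_suc_cons; simpl; tauto. Qed.

Lemma forces_orL A B :
  forces M (Sq (A :: G) fs is ms) x -> forces M (Sq (B :: G) fs is ms) x ->
  forces M (Sq (Or A B :: G) fs is ms) x.
Proof. rewrite !forces_ant_cons; simpl; tauto. Qed.

Lemma forces_orR A B :
  forces M (Sq G (A :: B :: fs) is ms) x -> forces M (Sq G (Or A B :: fs) is ms) x.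
Proof. rewrite !forces_suc_cons; simpl; tauto. Qed.

Lemma forces_impL A B :
  forces M (Sq (Imp A B :: G) (A :: fs) is ms) x -> forces M (Sq (B :: G) fs is ms) x ->
  forces M (Sq (Imp A B :: G) fs is ms) x.
Proof.
  rewrite !forces_ant_cons, !forces_suc_cons.
  assert (fforces M x (Imp A B) -> fforces M x A -> fforces M x B)
    by (intros HAB; apply HAB, le_refl).
  tauto.
Qed.

Lemma forces_impR A B :
  forces M (Sq G fs (Sq [A] [B] [] [] :: is) ms) x -> forces M (Sq G (Imp A B :: fs) is ms) x.
Proof.
  rewrite forces_imp_cons, forces_suc_cons.
  intros [Hblock | Hrest]; [left | tauto].
  intros x' Hxx' HA; specialize (Hblock x' Hxx').
  rewrite forces_ant_cons, forces_suc_cons in Hblock.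
  destruct Hblock as [| [| Hempty]]; [tauto | tauto | destruct (not_forces_empty _ Hempty)].
Qed.

Lemma forces_boxL A S P Pi Pm :
  forces M (Sq (Box A :: G) fs is (Sq (A :: S) P Pi Pm :: ms)) x ->
  forces M (Sq (Box A :: G) fs is (Sq S P Pi Pm :: ms)) x.
Proof.
  rewrite !forces_ant_cons, !forces_box_cons.
  destruct (classic (fforces M x (Box A))) as [HA | HA]; [| tauto].
  intros [HnA | [Hblock | Hrest]]; [tauto | | tauto].
  right; left; intros y Hxy.
  specialize (Hblock y Hxy); rewrite forces_ant_cons in Hblock.
  destruct Hblock as [HnAy | HS]; [| exact HS].
  exfalso; apply HnAy, (HA x y (le_refl M x) Hxy).
Qed.

Lemma forces_boxR A :
  forces M (Sq G fs (Sq [] [] [] [Sq [] [A] [] []] :: is) ms) x ->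
  forces M (Sq G (Box A :: fs) is ms) x.
Proof.
  rewrite forces_imp_cons, forces_suc_cons.
  intros [Hblock | Hrest]; [left | tauto].
  intros x' y Hxx' Hx'y; specialize (Hblock x' Hxx').
  rewrite forces_box_cons in Hblock.
  destruct Hblock as [Hbox | Hempty]; [| destruct (not_forces_empty _ Hempty)].
  specialize (Hbox y Hx'y); rewrite forces_suc_cons in Hbox.
  destruct Hbox as [HA | Hempty]; [exact HA | destruct (not_forces_empty _ Hempty)].
Qed.

Lemma forces_diaL A :
  forces M (Sq G fs is (Sq [A] [] [] [] :: ms)) x -> forces M (Sq (Dia A :: G) fs is ms) x.
Proof.
  rewrite forces_box_cons, forces_ant_cons.
  intros [Hblock | Hrest]; [left | tauto].
  intros [y [Hxy HA]]; specialize (Hblock y Hxy).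
  rewrite forces_ant_cons in Hblock.
  destruct Hblock as [HnA | Hempty]; [tauto | destruct (not_forces_empty _ Hempty)].
Qed.

Lemma forces_diaR A S P Pi Pm :
  forces M (Sq G (Dia A :: fs) is (Sq S (A :: P) Pi Pm :: ms)) x ->
  forces M (Sq G (Dia A :: fs) is (Sq S P Pi Pm :: ms)) x.
Proof.
  rewrite !forces_suc_cons, !forces_box_cons.
  destruct (classic (fforces M x (Dia A))) as [HA | HnA]; [tauto |].
  intros [| [Hblock | Hrest]]; [tauto | | tauto].
  right; left; intros y Hxy.
  specialize (Hblock y Hxy); rewrite forces_suc_cons in Hblock.
  destruct Hblock as [HAy | HS]; [| exact HS].
  exfalso; apply HnA; exists y; tauto.
Qed.

Lemma forces_trans G' S P Pi Pm :
  forces M (Sq (G ++ G') fs (Sq (G' ++ S) P Pi Pm :: is) ms) x ->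
  forces M (Sq (G ++ G') fs (Sq S P Pi Pm :: is) ms) x.
Proof.
  rewrite !forces_imp_cons.
  intros [Hblock | Hrest]; [| tauto].
  destruct (classic (forall A, In A G' -> fforces M x A)) as [HG' | HG'].
  - left; intros x' Hxx'; specialize (Hblock x' Hxx').
    rewrite forces_ant_app in Hblock.
    destruct Hblock as [[A [HA HnA]] | HS]; [| exact HS].
    exfalso; apply HnA; eapply fforces_mono; eauto.
  - apply not_all_ex_not in HG' as [A HA].
    right; apply (forces_Sq_ant A); [apply in_or_app |]; tauto.
Qed.

Lemma forces_inter_fc S P Pi Pm T :
  forces M (Sq G fs (Sq S P Pi (star T :: Pm) :: is) (T :: ms)) x ->
  forces M (Sq G fs (Sq S P Pi Pm :: is) (T :: ms)) x.
Proof.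
  rewrite !forces_box_cons.
  destruct (classic (forall y, R M x y -> forces M T y)) as [HT | HT]; [tauto |].
  apply not_all_ex_not in HT as [y HT].
  assert (Hxy : R M x y) by tauto; assert (HnT : ~ forces M T y) by tauto.
  intros [| Hrest]; [tauto | right].
  rewrite !forces_imp_cons in *.
  destruct Hrest as [Hblock | Hrest]; [left | tauto].
  intros x' Hxx'; specialize (Hblock x' Hxx').
  rewrite forces_box_cons in Hblock.
  destruct Hblock as [Hstar | HS]; [exfalso | exact HS].
  destruct (FC M x x' y Hxx' Hxy) as [z [Hx'z Hyz]].
  apply HnT; eapply forces_star_le; eauto.
Qed.

Lemma forces_inter_bc L Tf Ti Tm U :
  forces M (Sq G fs (Sq [] [] [] [U] :: is) (Sq L Tf (U :: Ti) Tm :: ms)) x ->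
  forces M (Sq G fs is (Sq L Tf (U :: Ti) Tm :: ms)) x.
Proof.
  rewrite forces_imp_cons.
  intros [Hblock | Hrest]; [| exact Hrest].
  apply forces_box_cons; left; intros y Hxy.
  apply forces_imp_cons; left; intros y' Hyy'.
  destruct (BC M x y y' Hxy Hyy') as [x' [Hxx' Hx'y']].
  specialize (Hblock x' Hxx'); rewrite forces_box_cons in Hblock.
  destruct Hblock as [HU | Hempty]; [auto | destruct (not_forces_empty _ Hempty)].
Qed.

End Rules.
End Forcing.

Lemma valid_fill C s : valid s -> valid (fill C s).
Proof. intros Hs M x; apply forces_fill, Hs. Qed.

Lemma valid_fill_mono C s1 s2 :
  valid (fill C s1) -> (forall M x, forces M s1 x -> forces M s2 x) -> valid (fill C s2).
Proof. intros H1 Hs M x; eapply forces_fill_mono; [apply Hs | apply H1]. Qed.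

Lemma valid_fill_mono2 C s1 s2 s3 :
  valid (fill C s1) -> valid (fill C s2) ->
  (forall M x, forces M s1 x -> forces M s2 x -> forces M s3 x) -> valid (fill C s3).
Proof.
  intros H1 H2 Hs M x; eapply forces_fill_mono2; [apply Hs | apply H1 | apply H2].
Qed.

Theorem theorem3p1 : forall s : bseq, provable s -> valid s.
Proof.
  intros s H; induction H.
  - apply (valid_fill_mono C _ _ IHprovable); intros M x; apply forces_perm; assumption.
  - apply valid_fill; intros M x; apply forces_ax_bot.
  - apply valid_fill; intros M x; apply forces_ax_top.
  - apply valid_fill; intros M x; apply forces_ax_id.
  - apply (valid_fill_mono C _ _ IHprovable); intros M x; apply forces_andL.
  - apply (valid_fill_mono2 C _ _ _ IHprovable1 IHprovable2); intros M x; apply forces_andR.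
  - apply (valid_fill_mono2 C _ _ _ IHprovable1 IHprovable2); intros M x; apply forces_orL.
  - apply (valid_fill_mono C _ _ IHprovable); intros M x; apply forces_orR.
  - apply (valid_fill_mono2 C _ _ _ IHprovable1 IHprovable2); intros M x; apply forces_impL.
  - apply (valid_fill_mono C _ _ IHprovable); intros M x; apply forces_impR.
  - apply (valid_fill_mono C _ _ IHprovable); intros M x; apply forces_boxL.
  - apply (valid_fill_mono C _ _ IHprovable); intros M x; apply forces_boxR.
  - apply (valid_fill_mono C _ _ IHprovable); intros M x; apply forces_diaL.
  - apply (valid_fill_mono C _ _ IHprovable); intros M x; apply forces_diaR.
  - apply (valid_fill_mono C _ _ IHprovable); intros M x; apply forces_trans.
  - apply (valid_fill_mono C _ _ IHprovable); intros M x; apply forces_inter_fc.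
  - apply (valid_fill_mono C _ _ IHprovable); intros M x; apply forces_inter_bc.
Qed.
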